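(* Let $\varepsilon\in(0,1]$ and $D>0$, and set $n_0:=4K(d+1)/\varepsilon$. Then the set $$\mathcal S=\bigcup_{n\ge n_0}\ \bigcup_{\theta\in\Theta}\ \bigcup_{(x,x^* )\in[K^\theta]\times[K^*]:\,|I_{n,D}(x,x^*,\theta)|\ge n\varepsilon}\{S^{\theta,n}_x-S^{*,n}_{x^*}\}$$ is relatively compact in $(C^0([0,1]),\|\cdot\|_\infty)$.
   Context: Fix integers $K\ge1$, $d\ge1$, $\sigma_-\in(0,1)$; $[K']=\{1,\dots,K'\}$; $\Delta_{K'}$ = probability vectors on $[K']$; $\Sigma^{\sigma_-}_{K'}$ = $K'\times K'$ stochastic matrices with all entries $\ge\sigma_-$; $\mathbb R_d[X]$ = real polynomials of degree $\le d$ on $\mathbb R_+$; $\Gamma$ a set of probability densities on $\mathbb R$. $\Theta=\bigcup_{K'=1}^K\{[K']\}\times\Delta_{K'}\times\Sigma^{\sigma_-}_{K'}\times\Gamma^{K'}\times(\mathbb R_d[X])^{K'}$, elements $\theta=(K^\theta,\pi^\theta,Q^\theta,\gamma^\theta,T^\theta)$ with trends $T^\theta_x\in\mathbb R_d[X]$; $\theta^*=(K^*,\pi^*,Q^*,\gamma^*,T^* )\in\Theta$ is a fixed (true) parameter. $I_{n,D}(x,x^*,\theta)=\{t\in\{1,\dots,n\}:|T^*_{x^*}(t)-T^\theta_x(t)|\le D\}$. Rescaled trends: $S^{\theta,n}_x(u)=T^\theta_x(nu)$ and $S^{*,n}_{x^*}(u)=T^*_{x^*}(nu)$ for $u\in[0,1]$.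 *)

From HB Require Import structures.
From mathcomp Require Import all_boot all_order all_algebra.
From mathcomp Require Import all_classical all_reals all_analysis.
Set Implicit Arguments. Unset Strict Implicit. Unset Printing Implicit Defensive.
Import Order.TTheory GRing.Theory Num.Theory.
Import numFieldNormedType.Exports.
Local Open Scope classical_set_scope.
Local Open Scope ring_scope.

(* A parameter theta = (K^theta, pi^theta, Q^theta, gamma^theta, T^theta).
   Hidden states [K'] = {1..K'} are represented by 'I_K' = {0..K'-1}. *)
Record param (R : realType) := Param {
  pK : nat;
  ppi : 'I_pK -> R;
  pQ : 'I_pK -> 'I_pK -> R;
  pgamma : 'I_pK -> R -> R;
  pT : 'I_pK -> {poly R} }.
Arguments pK {R} p.
Arguments ppi {R} p _.
Arguments pQ {R} p _ _.
Arguments pgamma {R} p _ _.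
Arguments pT {R} p _.

Definition is_density (R : realType) (g : R -> R) : Prop :=
  (forall x, 0 <= g x) /\ measurable_fun setT g /\
  (\int[@lebesgue_measure R]_x (g x)%:E = 1%E)%E.

Definition in_Theta (R : realType) (K d : nat) (sigma_m : R)
    (Gamma : set (R -> R)) (th : param R) : Prop :=
  [/\ (1 <= pK th <= K)%N,
      (forall i, 0 <= ppi th i) /\ \sum_i ppi th i = 1,
      (forall i j, sigma_m <= pQ th i j) /\ (forall i, \sum_j pQ th i j = 1),
      (forall i, Gamma (pgamma th i)) &
      (forall i, (size (pT th i) <= d.+1)%N)].

Definition card_I (R : realType) (n : nat) (D : R) (Tx Tstar : {poly R}) : nat :=
  size [seq t <- iota 1 n | `|Tstar.[t%:R] - Tx.[t%:R]| <= D].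

Definition rescale (R : realType) (n : nat) (T : {poly R}) : R -> R :=
  fun u => T.[n%:R * u].

Definition setS (R : realType) (K d : nat) (sigma_m : R) (Gamma : set (R -> R))
    (thstar : param R) (eps D : R) : set (R -> R) :=
  [set f | exists (n : nat) (th : param R) (x : 'I_(pK th)) (xs : 'I_(pK thstar)),
     [/\ 4 * K%:R * (d.+1)%:R / eps <= n%:R,
         in_Theta K d sigma_m Gamma th,
         n%:R * eps <= (card_I n D (pT th x) (pT thstar xs))%:R &
         f = (fun u => rescale n (pT th x) u - rescale n (pT thstar xs) u)]].

From HB Require Import structures.
From mathcomp Require Import all_boot all_order all_algebra.
From mathcomp Require Import all_classical all_reals all_analysis.
From mathcomp Require Import lra.
Set Implicit Arguments. Unset Strict Implicit. Unset Printing Implicit Defensive.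
Import Order.TTheory GRing.Theory Num.Theory.
Import numFieldNormedType.Exports.
Local Open Scope classical_set_scope.
Local Open Scope ring_scope.

(* The difference of two rescaled trends is u |-> P(n u) for a polynomial P of
   degree at most d, and |P| <= D on a set of m >= n eps integers in [1, n].
   Every q-th of these integers, q = floor(m / (d+1)), gives d+1 nodes at
   mutual distance >= q, and Lagrange interpolation at these nodes bounds P on
   [0, n] by (d+1) D (n/q)^d; the choice of n0 makes n/q <= 2(d+1)/eps, so the
   bound M does not depend on n or theta.  Hence each element of S is the
   interpolant, at the equispaced nodes i/d of [0, 1], of a value vector in
   the box [-M, M]^(d+1).  The interpolation map is continuous into the
   topology of uniform convergence on [0, 1], so the image of the box is
   compact; this topology is not Hausdorff but it is uniform, hence regular,
   which suffices for the closure of a compact set to be compact. *)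

Lemma regular_compact_closure {T : topologicalType} (A : set T) :
  regular_space T -> compact A -> compact (closure A).
Proof.
move=> regT cptA F PF FclA.
pose G := filter_from [set BW : set T * set T | F BW.1 /\ set_nbhs BW.1 BW.2]
  (fun BW => A `&` BW.2).
have PG : ProperFilter G.
  apply: filter_from_proper.
    apply: filter_from_filter; first by exists (setT, setT); split; exact: filterT.
    move=> [B1 W1] [B2 W2] [FB1 W1B] [FB2 W2B].
    exists (B1 `&` B2, W1 `&` W2); last by rewrite /= setIACA setIid.
    split; first exact: filterI.
    by move=> z [B1z B2z]; apply: filterI; [exact: W1B | exact: W2B].
  move=> [B W] [FB WB]; have [b [Bb clAb]] := filter_ex (filterI FB FclA).
  by have [a [Aa Wa]] := clAb _ (WB _ Bb); exists a.
have GA : G A by exists (setT, setT); [split; exact: filterT | rewrite setIT].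
have [x [Ax clGx]] := cptA G PG GA.
exists x; split; first exact: subset_closure.
move=> C U FC Ux; have [V Vx clVU] := regT x U Ux.
apply: contrapT => CU0.
have GAV : G (A `&` ~` closure V).
  exists (C, ~` closure V) => //; split => // c Cc.
  apply: open_nbhs_nbhs; split; first exact/closed_openC/closed_closure.
  by move=> /clVU Uc; apply: CU0; exists c.
have [y [[_ nclVy] Vy]] := clGx _ _ GAV Vx.
by apply: nclVy; exact: subset_closure.
Qed.

Section LagrangeInterpolation.
Variables (F : fieldType) (N : nat) (s : 'I_N -> F).

Definition lagrange_basis (i : 'I_N) (u : F) : F :=
  \prod_(j < N | j != i) (u - s j) / \prod_(j < N | j != i) (s i - s j).

Definition lagrange_basis_poly (i : 'I_N) : {poly F} :=
  (\prod_(j < N | j != i) (s i - s j))^-1 *: \prod_(j < N | j != i) ('X - (s j)%:P).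

Lemma horner_lagrange_basis_poly i u :
  (lagrange_basis_poly i).[u] = lagrange_basis i u.
Proof.
by rewrite hornerZ horner_prod mulrC; under eq_bigr do rewrite hornerXsubC.
Qed.

Lemma size_lagrange_basis_poly i : (size (lagrange_basis_poly i) <= N)%N.
Proof.
rewrite (leq_trans (size_scale_leq _ _)) // size_prod; last first.
  by move=> j _; rewrite polyXsubC_eq0.
under eq_bigr do rewrite size_XsubC.
rewrite sum_nat_const cardC1 card_ord.
by case: N i => [[]|n] //= _; rewrite mulnC mul2n -addnn -addSn addnK.
Qed.

Hypothesis s_inj : injective s.

Lemma lagrange_basis_node i j : lagrange_basis i (s j) = (i == j)%:R.
Proof.
rewrite /lagrange_basis; have [<-|ij] := eqVneq i j.
  rewrite divff //; apply/prodf_neq0 => k ki.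
  by rewrite subr_eq0 (inj_eq s_inj) eq_sym.
by rewrite (bigD1 j) 1?eq_sym //= subrr !mul0r.
Qed.

Lemma lagrange_interpolation (p : {poly F}) : (size p <= N)%N ->
  forall u, p.[u] = \sum_i p.[s i] * lagrange_basis i u.
Proof.
move=> sp u; pose q := p - \sum_i p.[s i] *: lagrange_basis_poly i.
have q_roots : all (root q) [seq s i | i <- enum 'I_N].
  apply/allP => _ /mapP[j _ ->]; rewrite /root hornerD hornerN horner_sum.
  rewrite (bigD1 j) //= big1 => [|i ij].
    by rewrite hornerZ horner_lagrange_basis_poly lagrange_basis_node eqxx mulr1 addr0 subrr.
  by rewrite hornerZ horner_lagrange_basis_poly lagrange_basis_node (negPf ij) mulr0.
have size_q : (size q <= N)%N.
  rewrite (leq_trans (size_polyD _ _)) // size_polyN geq_max sp /=.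
  rewrite (leq_trans (size_sum _ _ _)) //; apply/bigmax_leqP => i _.
  exact: leq_trans (size_scale_leq _ _) (size_lagrange_basis_poly i).
have q0 : q == 0.
  apply: contraLR size_q => /max_poly_roots /(_ q_roots).
  by rewrite map_inj_uniq ?enum_uniq // size_map size_enum_ord -ltnNge => /(_ isT).
move: q0; rewrite subr_eq0 => /eqP {1}->; rewrite horner_sum.
by apply: eq_bigr => i _; rewrite hornerZ horner_lagrange_basis_poly.
Qed.
End LagrangeInterpolation.

Lemma size_comp_scaleX_le (R : comNzRingType) (p : {poly R}) (c : R) :
  (size (p \Po (c *: 'X)) <= size p)%N.
Proof.
have [->|p_neq0] := eqVneq p 0; first by rewrite comp_poly0.
rewrite (leq_trans (size_comp_poly_leq _ _)) // -(prednK (_ : 0 < size p)%N) ?size_poly_gt0 //.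
rewrite ltnS -[leqRHS]muln1 leq_mul // -subn1 leq_subLR.
by rewrite (leq_trans (size_scale_leq _ _)) ?size_polyX.
Qed.

Section SeparatedNodes.
Variables (R : realFieldType) (N : nat) (s : 'I_N -> R) (delta : R).
Hypotheses (delta_gt0 : 0 < delta)
  (s_sep : forall i j, i != j -> delta <= `|s i - s j|).

Lemma separated_nodes_inj : injective s.
Proof.
move=> i j sij; apply/eqP; apply: contraTT delta_gt0 => /s_sep.
by rewrite sij subrr normr0 -leNgt.
Qed.

Lemma norm_lagrange_basis_le i u (A : R) :
  (forall j, `|u - s j| <= A) -> `|lagrange_basis s i u| <= (A / delta) ^+ N.-1.
Proof.
move=> uA; have card_neq_i : #|[pred j | j != i]| = N.-1 by rewrite cardC1 card_ord.
have A_ge0 : 0 <= A := le_trans (normr_ge0 _) (uA i).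
rewrite /lagrange_basis normrM normfV !normr_prod expr_div_n.
have den_ge : delta ^+ N.-1 <= \prod_(j < N | j != i) `|s i - s j|.
  rewrite -card_neq_i -prodr_const; apply: ler_prod => j ji.
  by rewrite (ltW delta_gt0) s_sep // eq_sym.
have den_gt0 : 0 < delta ^+ N.-1 by rewrite exprn_gt0.
rewrite ler_pdivrMr ?(lt_le_trans den_gt0) //.
apply: (le_trans (y := A ^+ N.-1)).
  rewrite -card_neq_i -prodr_const; apply: ler_prod => j _.
  by rewrite normr_ge0 uA.
rewrite -{1}[A ^+ N.-1](divfK (lt0r_neq0 den_gt0)).
by rewrite ler_wpM2l // divr_ge0 ?exprn_ge0 // ltW.
Qed.

Lemma norm_horner_le_separated_nodes (p : {poly R}) (D A u : R) :
  (size p <= N)%N -> (forall i, `|p.[s i]| <= D) -> (forall i, `|u - s i| <= A) ->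
  `|p.[u]| <= N%:R * (D * (A / delta) ^+ N.-1).
Proof.
move=> size_p pD uA.
rewrite (lagrange_interpolation separated_nodes_inj size_p).
apply: le_trans (ler_norm_sum _ _ _) _.
rewrite mulr_natl -[N in _ *+ N]card_ord -sumr_const; apply: ler_sum => i _.
by rewrite normrM ler_pM ?normr_ge0 ?norm_lagrange_basis_le.
Qed.

End SeparatedNodes.

Lemma nth_sorted_ltn_add (T : seq nat) a k : sorted ltn T ->
  (a + k < size T)%N -> (nth 0 T a + k <= nth 0 T (a + k))%N.
Proof.
move=> sT; elim: k => [|k IHk] ak; first by rewrite !addn0.
have ak' : (a + k < size T)%N by rewrite (leq_trans _ ak) // addnS.
rewrite !addnS (leq_ltn_trans (IHk ak')) //.
by apply: (sorted_ltn_nth ltn_trans 0 sT); rewrite ?inE // -addnS.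
Qed.

Lemma norm_horner_le_integer_points (R : realFieldType) (N n : nat)
    (T : seq nat) (p : {poly R}) (D : R) :
  (0 < N <= size T)%N -> sorted ltn T -> (forall t, t \in T -> (t <= n)%N) ->
  (size p <= N)%N -> (forall t, t \in T -> `|p.[t%:R]| <= D) ->
  forall u, 0 <= u <= n%:R ->
  `|p.[u]| <= N%:R * (D * (n%:R / (size T %/ N)%:R) ^+ N.-1).
Proof.
move=> /andP[N_gt0 N_le] sT Tn size_p pD u /andP[u_ge0 u_le].
set q := (size T %/ N)%N.
have q_gt0 : (0 < q)%N by rewrite divn_gt0.
have node_idx (j : 'I_N) : (j * q < size T)%N.
  by rewrite (leq_trans _ (leq_divM (size T) N)) // mulnC ltn_pmul2l.
pose s (j : 'I_N) : R := (nth 0 T (j * q))%N%:R.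
have s_gap (i j : 'I_N) : (i < j)%N -> q%:R <= s j - s i.
  move=> lt_ij; rewrite lerBrDr -natrD ler_nat.
  have := nth_sorted_ltn_add (a := i * q) (k := (j - i) * q) sT.
  rewrite -mulnDl subnKC ?(ltnW lt_ij) // => /(_ (node_idx j)).
  apply: leq_trans; rewrite addnC leq_add2l leq_pmull // subn_gt0 //.
have s_sep (i j : 'I_N) : i != j -> q%:R <= `|s i - s j|.
  rewrite neq_ltn => /orP[lt_ij|lt_ji].
    by rewrite distrC (le_trans (s_gap _ _ lt_ij)) ?ler_norm.
  by rewrite (le_trans (s_gap _ _ lt_ji)) ?ler_norm.
apply: (norm_horner_le_separated_nodes (s := s)) => //.
- by rewrite ltr0n.
- by move=> i; apply/pD/mem_nth.
- move=> i; have s_le : s i <= n%:R by rewrite ler_nat Tn // mem_nth.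
  have s_ge0 : 0 <= s i by rewrite ler0n.
  by rewrite ler_norml; apply/andP; split; lra.
Qed.

Section EquispacedNodes.
Variables (R : realFieldType) (d : nat).
Hypothesis d_gt0 : (0 < d)%N.

Definition equi_node (i : 'I_d.+1) : R := i%:R / d%:R.

Lemma equi_node_itv i : 0 <= equi_node i <= 1.
Proof.
have d_gt0' : 0 < d%:R :> R by rewrite ltr0n.
by rewrite divr_ge0 ?ler0n //= ler_pdivrMr // mul1r ler_nat -ltnS.
Qed.

Lemma equi_node_sep i j : i != j -> d%:R^-1 <= `|equi_node i - equi_node j|.
Proof.
have d_gt0' : 0 < d%:R :> R by rewrite ltr0n.
move=> ij; rewrite /equi_node -mulrBl normrM.
rewrite (ger0_norm (_ : 0 <= d%:R^-1)) ?invr_ge0 ?ler0n //.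
rewrite -[X in X <= _]mul1r ler_wpM2r ?invr_ge0 ?ler0n //.
have [lt_ij|lt_ji] : (i < j)%N \/ (j < i)%N by apply/orP; rewrite -neq_ltn.
  have : (i%:R + 1 <= j%:R :> R) by rewrite natr1 ler_nat.
  by rewrite ler_normr => ?; apply/orP; right; lra.
have : (j%:R + 1 <= i%:R :> R) by rewrite natr1 ler_nat.
by rewrite ler_normr => ?; apply/orP; left; lra.
Qed.

Lemma equi_node_inj : injective equi_node.
Proof.
by apply: (separated_nodes_inj (delta := d%:R^-1)) equi_node_sep; rewrite invr_gt0 ltr0n.
Qed.

Lemma norm_lagrange_equi_node_le i u : 0 <= u <= 1 ->
  `|lagrange_basis equi_node i u| <= d%:R ^+ d.
Proof.
move=> /andP[u_ge0 u_le1].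
have := norm_lagrange_basis_le (delta := d%:R^-1) _ equi_node_sep i (A := 1).
rewrite invr_gt0 ltr0n invrK mul1r => /(_ d_gt0); apply=> j.
by have /andP[? ?] := equi_node_itv j; rewrite ler_norml; apply/andP; split; lra.
Qed.

End EquispacedNodes.
Arguments equi_node {R} d i.

Lemma lincomb_uniform_continuous (R : realType) (U : choiceType) (A : set U)
    (N : nat) (phi : 'I_N -> U -> R) (L : R) :
  (forall i u, A u -> `|phi i u| <= L) ->
  continuous (fun v : 'rV[R]_N =>
    (fun u => \sum_i v ord0 i * phi i u) : {uniform` A -> R}).
Proof.
move=> phiL v P /uniform_nbhs[E [entE EP]].
rewrite -entourage_from_ballE in entE; case: entE => e /= e_gt0 eE.
have c_gt1 : N%:R * `|L| < 1 + N%:R * `|L| by rewrite ltrDr.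
set c := 1 + _ in c_gt1.
have c_gt0 : 0 < c by apply: le_lt_trans c_gt1; rewrite mulr_ge0.
apply/nbhs_ballP; exists (e / c) => [|w vw]; first by rewrite /= divr_gt0.
apply: EP => u Au; apply: eE; rewrite /= -ball_normE /ball_ /= -sumrB.
apply: le_lt_trans (ler_norm_sum _ _ _) _.
apply: (@le_lt_trans _ _ (\sum_(i < N) e / c * `|L|)).
  apply: ler_sum => i _; rewrite -mulrBl normrM.
  rewrite ler_pM ?normr_ge0 ?(le_trans (phiL i u Au)) ?ler_norm //.
  by apply: ltW; have [_ /(_ ord0 i)] := vw; rewrite -ball_normE.
rewrite sumr_const card_ord -mulr_natr -mulrA mulrAC ltr_pdivrMr //.
by rewrite ltr_pM2l // mulrC.
Qed.

Lemma ler_natr_div_divn (R : realFieldType) (n m N : nat) (eps : R) :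
  0 < eps -> (0 < N <= m)%N -> n%:R * eps <= m%:R ->
  n%:R / (m %/ N)%:R <= 2 * N%:R / eps.
Proof.
move=> eps_gt0 /andP[N_gt0 N_le] nm.
have q_gt0 : (0 < m %/ N)%N by rewrite divn_gt0.
have m_le : (m <= 2 * N * (m %/ N))%N.
  apply/ltnW/(leq_trans (ltn_ceil m N_gt0)).
  by rewrite mulnAC leq_mul2r mul2n -addnn -add1n leq_add2r q_gt0 orbT.
rewrite ler_pdivrMr ?ltr0n // mulrAC ler_pdivlMr //.
by apply: le_trans nm _; rewrite -!natrM ler_nat.
Qed.

Definition coord_box (R : realType) (n : nat) (M : R) : set 'rV[R]_n :=
  [set v | forall i, `[- M, M]%classic (v ord0 i)].
Arguments coord_box {R} n M.

Lemma compact_coord_box (R : realType) (n : nat) (M : R) : compact (coord_box n M).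
Proof.
by apply: (rV_compact (A := fun=> `[- M, M]%classic)) => i; exact: segment_compact.
Qed.

Definition equi_interpolant (R : realFieldType) (d : nat) (v : 'rV[R]_d.+1)
  (u : R) : R := \sum_i v ord0 i * lagrange_basis (@equi_node R d) i u.

Lemma setS_sub_equi_interpolants (R : realType) (K d : nat) (sigma_m : R)
    (Gamma : set (R -> R)) (thstar : param R) (eps D : R) :
  (1 <= K)%N -> (0 < d)%N -> in_Theta K d sigma_m Gamma thstar ->
  0 < eps -> 0 <= D ->
  setS K d sigma_m Gamma thstar eps D `<=`
    (@equi_interpolant R d) @` coord_box d.+1 (d.+1%:R * (D * (2 * d.+1%:R / eps) ^+ d)).
Proof.
move=> K_gt0 d_gt0 [_ _ _ _ size_Ts] eps_gt0 D_ge0 _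
  [n [th [x [xs [n_ge [_ _ _ _ size_T] card_ge ->]]]]].
pose P := pT th x - pT thstar xs.
pose Q := P \Po (n%:R *: 'X).
have QE u : Q.[u] = P.[n%:R * u] by rewrite horner_comp hornerZ hornerX.
have size_P : (size P <= d.+1)%N.
  by rewrite (leq_trans (size_polyD _ _)) // size_polyN geq_max size_T size_Ts.
have size_Q : (size Q <= d.+1)%N := leq_trans (size_comp_scaleX_le _ _) size_P.
rewrite /card_I in card_ge; set T := [seq t <- iota 1 n | _] in card_ge.
have N_le_neps : 2 * d.+1%:R <= n%:R * eps.
  have K_ge1 : 1 <= K%:R :> R by rewrite ler1n.
  have N_ge0 : 0 <= d.+1%:R :> R by rewrite ler0n.
  move: n_ge; rewrite ler_pdivrMr // => ?; nra.
have N_le_T : (0 < d.+1 <= size T)%N.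
  rewrite ltn0Sn -(ler_nat R) (le_trans _ card_ge) // (le_trans _ N_le_neps) //.
  by rewrite ler_peMl ?ler0n ?ler1n.
exists (\row_i Q.[equi_node d i]).
  move=> i; rewrite mxE QE /= in_itv /= -ler_norml.
  have /andP[x_ge0 x_le1] := equi_node_itv R d_gt0 i.
  apply: le_trans (norm_horner_le_integer_points (n := n) (D := D) N_le_T _ _ size_P _ _) _.
  - by apply: sorted_filter; [exact: ltn_trans | exact: iota_ltn_sorted].
  - by move=> t; rewrite mem_filter mem_iota add1n ltnS => /andP[_ /andP[]].
  - by move=> t; rewrite mem_filter distrC !hornerE => /andP[].
  - by rewrite mulr_ge0 ?ler0n //= ler_piMr ?ler0n.
  rewrite ler_wpM2l ?ler0n // ler_wpM2l //.
  apply: lerXn2r; last exact: ler_natr_div_divn eps_gt0 N_le_T card_ge.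
    by rewrite nnegrE divr_ge0 ?ler0n.
  by rewrite nnegrE divr_ge0 ?mulr_ge0 ?ler0n ?(ltW eps_gt0).
rewrite funeqE => u; rewrite /rescale -hornerN -hornerD -/P -QE.
rewrite (lagrange_interpolation (@equi_node_inj R d d_gt0) size_Q).
by apply: eq_bigr => i _; rewrite mxE.
Qed.

Theorem theorem11 (R : realType) (K d : nat) (sigma_m : R) (Gamma : set (R -> R))
    (thstar : param R) (eps D : R) :
  (1 <= K)%N -> (1 <= d)%N -> 0 < sigma_m < 1 ->
  (forall g, Gamma g -> is_density g) ->
  in_Theta K d sigma_m Gamma thstar ->
  0 < eps <= 1 -> 0 < D ->
  compact (closure (setS K d sigma_m Gamma thstar eps D
                     : set {uniform` `[0, 1] -> R})).
Proof.
move=> K_gt0 d_gt0 _ _ Thstar /andP[eps_gt0 _] D_gt0.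
rewrite -precompactE.
apply: (@precompact_subset {uniform` `[0, 1] -> R} _ _
  (setS_sub_equi_interpolants K_gt0 d_gt0 Thstar eps_gt0 (ltW D_gt0))).
rewrite precompactE; apply: regular_compact_closure; first exact: uniform_regular.
apply: (@continuous_compact _ {uniform` `[0, 1] -> R} (@equi_interpolant R d)).
  apply/continuous_subspaceT/(lincomb_uniform_continuous (L := d%:R ^+ d)).
  by move=> i u; rewrite /= in_itv => /norm_lagrange_equi_node_le; apply.
exact: compact_coord_box.
Qed.
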